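(* Let $p,q\ge1$, $J\subseteq[p-1]$, $K\subseteq[q-1]$ and $R\subseteq[p+q-1]$. For $\zeta\in\mathfrak{S}^{(p,q)}$ define $r_\zeta\colon\mathcal{Q}_p\times\mathcal{Q}_q\to\mathcal{Q}_{p+q}$ by $r_\zeta(J',K')=\mathrm{Des}\big((\zeta_{J'}\times\zeta_{K'})\cdot\zeta^{-1}\big)$. Then the coefficient of $M_{R,p+q}$ in the product $M_{J,p}\cdot M_{K,q}$ equals the number of $\zeta\in\mathfrak{S}^{(p,q)}$ such that the set $\{(J',K')\in\mathcal{Q}_p\times\mathcal{Q}_q: r_\zeta(J',K')\subseteq R\}$ has a greatest element with respect to componentwise inclusion and this greatest element is $(J,K)$.
   Context: $\mathcal{Q}_n$ denotes the set of subsets of $[n-1]$ ordered by inclusion. Permutations in one-line notation, product is composition. $\mathrm{Des}(x)=\{i:x_i>x_{i+1}\}$. For $x\in\mathfrak{S}_p,y\in\mathfrak{S}_q$, $x\times y\in\mathfrak{S}_{p+q}$ has $(x\times y)(i)=x_i$ ($i\le p$), $(x\times y)(p+j)=p+y_j$. $\mathfrak{S}^{(p,q)}=\{\zeta\in\mathfrak{S}_{p+q}:\zeta_1<\cdots<\zeta_p,\zeta_{p+1}<\cdots<\zeta_{p+q}\}$. For $J=\{p_1<\cdots<p_k\}\subseteq[n-1]$, $\zeta_J=(n{-}p_1{+}1,\ldots,n,\ n{-}p_2{+}1,\ldots,n{-}p_1,\ldots,1,\ldots,n{-}p_k)\in\mathfrak{S}_n$, $\zeta_\emptyset=1_n$.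 For $J=\{j_1<\cdots<j_{k-1}\}\subseteq[n-1]$ with composition $\alpha=(j_1,j_2-j_1,\ldots,n-j_{k-1})$, $M_{J,n}=\sum_{i_1<\cdots<i_k}x_{i_1}^{\alpha_1}\cdots x_{i_k}^{\alpha_k}$ is the monomial quasi-symmetric function (commuting variables $x_1,x_2,\ldots$); products are products of formal power series. *)

From HB Require Import structures.
From mathcomp Require Import all_boot all_order all_algebra all_fingroup.
From mathcomp Require Import mpoly.

Set Implicit Arguments.
Unset Strict Implicit.
Unset Printing Implicit Defensive.

Import GRing.Theory.
Local Open Scope ring_scope.

(* Conventions:
   - A subset of [n-1] is represented as  A : {set 'I_n.-1}, where the
     element i : 'I_n.-1 stands for the integer i+1 in [n-1].
   - Positions / values of permutations in 'S_n (and of one-line words) are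
     0-indexed: position i (0-indexed) is position i+1 (1-indexed). *)

Lemma ltn_predS_ord n (i : 'I_n.-1) : (i.+1 < n)%N.
Proof. by case: n i => [[]|n] i //=; rewrite ltnS. Qed.

Definition pos_hi n (i : 'I_n.-1) : 'I_n := Ordinal (ltn_predS_ord i).
Definition pos_lo n (i : 'I_n.-1) : 'I_n := Ordinal (ltnW (ltn_predS_ord i)).

Definition Des n (x : 'I_n -> nat) : {set 'I_n.-1} :=
  [set i : 'I_n.-1 | (x (pos_hi i) < x (pos_lo i))%N].

(* zeta_J in S_n, in 0-indexed one-line notation (values 0..n-1):
   for J = {p_1 < ... < p_k}, position i (0-indexed) lying in the block
   p_{b-1} < i+1 <= p_b (p_0 = 0, p_{k+1} = n) is sent to
   n - p_b + (i - p_{b-1}) (0-indexed value). *)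
Definition zetaJ n (J : {set 'I_n.-1}) (i : nat) : nat :=
  let prev := (\max_(j in J | (j.+1 <= i)%N) j.+1)%N in
  let nmnext := (\max_(j in J | (i < j.+1)%N) (n - j.+1))%N in
  (nmnext + i - prev)%N.

Definition crossw (p : nat) (x y : nat -> nat) (i : nat) : nat :=
  if (i < p)%N then x i else (p + y (i - p))%N.

Definition shuffle_perm p q (z : 'S_(p + q)) : bool :=
  [forall i : 'I_(p + q).-1,
     (i.+1 != p) ==> (val (z (pos_lo i)) < val (z (pos_hi i)))%N].

Definition r_zeta p q (z : 'S_(p + q)) (J' : {set 'I_p.-1}) (K' : {set 'I_q.-1})
  : {set 'I_(p + q).-1} :=
  Des (fun i : 'I_(p + q) => crossw p (zetaJ J') (zetaJ K') (val ((z^-1)%g i))).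

Definition greatest_is p q (z : 'S_(p + q)) (R : {set 'I_(p + q).-1})
  (J : {set 'I_p.-1}) (K : {set 'I_q.-1}) : bool :=
  (r_zeta z J K \subset R) &&
  [forall J' : {set 'I_p.-1}, forall K' : {set 'I_q.-1},
     (r_zeta z J' K' \subset R) ==> (J' \subset J) && (K' \subset K)].

Definition count_zeta p q (J : {set 'I_p.-1}) (K : {set 'I_q.-1})
  (R : {set 'I_(p + q).-1}) : nat :=
  #|[set z : 'S_(p + q) | shuffle_perm z && greatest_is z R J K]|.

Definition compo n (J : {set 'I_n.-1}) : seq nat :=
  pairmap (fun a b => (b - a)%N) 0%N
    (rcons (sort leq [seq (val j).+1 | j <- enum J]) n).

(* M_{J,n} truncated to the variables x_1, ..., x_N (x_{i+1} = 'X_i):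
   sum over i_1 < ... < i_k of x_{i_1}^{a_1} ... x_{i_k}^{a_k}.
   (enum I lists the elements of I : {set 'I_N} in increasing order.) *)
Definition Mqsym (N n : nat) (J : {set 'I_n.-1}) : {mpoly int[N]} :=
  let a := compo J in
  \sum_(I : {set 'I_N} | #|I| == size a)
     \prod_(x <- zip (enum I) a) 'X_x.1 ^+ x.2.

(* Expand both sides in monomials.  M_{J,n} is the sum of x_{g(1)}...x_{g(n)} over
   the weakly increasing words g : [n] -> [N] whose strict ascent set is J.  Sorting
   the concatenation g1 g2 of two such words stably gives a bijection between pairs
   (g1, g2) and pairs (g, zeta) with g weakly increasing on [p+q] and zeta a
   (p,q)-shuffle recording where each letter went; the only constraint is that g
   ascends at every position holding a letter of g2 followed by a letter of g1, and
   then g1, g2 are g read along the two blocks of zeta.  On the other side,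
   r_zeta(J',K') is contained in R exactly when R contains those forced positions and
   J', K' are contained in the sets of block positions whose images under zeta are
   adjacent positions lying in R.  Hence for R = Asc(g) the greatest element exists
   and is (Asc g1, Asc g2), and grouping the pairs (g, zeta) by Asc(g) yields the
   coefficients. *)

From HB Require Import structures.
From mathcomp Require Import all_boot all_order all_algebra all_fingroup.
From mathcomp Require Import mpoly zify.

Set Implicit Arguments.
Unset Strict Implicit.
Unset Printing Implicit Defensive.

Lemma zetaJ_prev_le n (J : {set 'I_n.-1}) i :
  (\max_(j in J | (j.+1 <= i)%N) j.+1 <= i)%N.
Proof. by apply/bigmax_leqP => j /andP[]. Qed.

Lemma zetaJ_next_le n (J : {set 'I_n.-1}) i :
  (\max_(j in J | (i < j.+1)%N) (n - j.+1) <= n - i.+1)%N.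
Proof. by apply/bigmax_leqP => j /andP[_ ij]; apply: leq_sub2l. Qed.

Lemma zetaJ_lt n (J : {set 'I_n.-1}) i : (i < n)%N -> (zetaJ J i < n)%N.
Proof. by have := zetaJ_next_le J i; have := zetaJ_prev_le J i; rewrite /zetaJ; lia. Qed.

Lemma zetaJ_descent n (J : {set 'I_n.-1}) (j : 'I_n.-1) :
  (zetaJ J j.+1 < zetaJ J j)%N = (j \in J).
Proof.
have jn := ltn_predS_ord j; have := zetaJ_prev_le J j; rewrite /zetaJ.
have [jJ|jNJ] := boolP (j \in J).
- have prevE : (\max_(k in J | (k.+1 <= j.+1)%N) k.+1)%N = j.+1.
    apply/eqP; rewrite eqn_leq zetaJ_prev_le.
    by apply: (bigmax_sup j); rewrite ?jJ ?ltnSn.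
  have := zetaJ_next_le J j.+1.
  have : (n - j.+1 <= \max_(k in J | (j < k.+1)%N) (n - k.+1))%N.
    by apply: (bigmax_sup j); rewrite ?jJ ?ltnSn.
  rewrite prevE; lia.
have neq_j k : k \in J -> (k : nat) != j.
  by move=> kJ; apply: contraNneq jNJ => /val_inj <-.
have prevE : (\max_(k in J | (k.+1 <= j.+1)%N) k.+1 =
               \max_(k in J | (k.+1 <= j)%N) k.+1)%N.
  by apply: eq_bigl => k; have [/neq_j|] := boolP (k \in J) => //=; lia.
have nextE : (\max_(k in J | (j.+1 < k.+1)%N) (n - k.+1) =
               \max_(k in J | (j < k.+1)%N) (n - k.+1))%N.
  by apply: eq_bigl => k; have [/neq_j|] := boolP (k \in J) => //=; lia.
by rewrite prevE nextE => prev_le; apply/negbTE; lia.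
Qed.

Lemma pos_gap n (x : 'I_n) :
  (x.+1 < n)%N -> {i : 'I_n.-1 | pos_lo i = x & pos_hi i = x.+1 :> nat}.
Proof.
move=> xn; have x_lt : (x < n.-1)%N by lia.
by exists (Ordinal x_lt); [apply: val_inj|].
Qed.

Lemma pos_lo_inj n : injective (@pos_lo n).
Proof. by move=> i i' /(congr1 val) /= /val_inj. Qed.

Definition adjacent_in n (R : {set 'I_n.-1}) (a b : 'I_n) :=
  [forall i, (pos_lo i == a) && (pos_hi i == b) ==> (i \in R)].

Lemma adjacent_inE n (R : {set 'I_n.-1}) i :
  adjacent_in R (pos_lo i) (pos_hi i) = (i \in R).
Proof.
apply/forallP/idP => [/(_ i)|iR i']; first by rewrite !eqxx.
by apply/implyP => /andP[/eqP/pos_lo_inj -> _].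
Qed.

Lemma adjacent_in_far n (R : {set 'I_n.-1}) (a b : 'I_n) :
  (a.+1 < b)%N -> adjacent_in R a b.
Proof.
move=> ab; apply/forallP => i; apply/implyP => /andP[/eqP ia /eqP ib].
by move: ab; rewrite -ia -ib /= ltnn.
Qed.

Definition nondecr n N (g : {ffun 'I_n -> 'I_N}) :=
  [forall x : 'I_n, forall y : 'I_n, (x <= y)%N ==> (g x <= g y)%N].

Definition ascents n N (g : {ffun 'I_n -> 'I_N}) : {set 'I_n.-1} :=
  [set i | (g (pos_lo i) < g (pos_hi i))%N].

Lemma nondecrP n N (g : {ffun 'I_n -> 'I_N}) :
  nondecr g -> forall x y : 'I_n, (x <= y)%N -> (g x <= g y)%N.
Proof. by move=> /forallP g_nd x y; move/forallP/(_ y)/implyP: (g_nd x). Qed.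

Lemma adjacent_in_ascents n N (g : {ffun 'I_n -> 'I_N}) (a b : 'I_n) :
  b = a.+1 :> nat -> adjacent_in (ascents g) a b = (g a < g b)%N.
Proof.
move=> ba; have [i ia ib] := @pos_gap _ a (ltac:(rewrite -ba; exact: ltn_ord b)).
have -> : b = pos_hi i by apply: ord_inj; rewrite ba ib.
by rewrite -ia adjacent_inE inE.
Qed.

Lemma card_ord_range n lo hi :
  (hi <= n)%N -> #|[set x : 'I_n | (lo <= x < hi)%N]| = (hi - lo)%N.
Proof.
move=> hn; rewrite -sum1dep_card -(big_mkord (fun i => lo <= i < hi)%N (fun _ => 1%N)).
rewrite -(big_nat_widen _ _ _ (fun i => lo <= i)%N) // -[(hi - lo)%N]muln1.
by rewrite -sum_nat_const_nat [RHS]big_geq_mkord big_mkord.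
Qed.

Section Standardization.
Variables (n : nat) (s : 'I_n -> nat).

Definition lex_lt (i j : 'I_n) := (s i < s j)%N || (s i == s j) && (i < j)%N.

Lemma lex_lt_irr i : lex_lt i i = false.
Proof. by rewrite /lex_lt !ltnn andbF. Qed.

Lemma lex_lt_trans : transitive lex_lt.
Proof. by move=> j i k; rewrite /lex_lt; lia. Qed.

Lemma lex_lt_total i j : i != j -> lex_lt i j || lex_lt j i.
Proof. by move=> ij; have : (i : nat) != j by []; rewrite /lex_lt; lia. Qed.

(* std_perm is the standardization of s: i goes to its position when 'I_n is
   sorted stably by s. *)
Definition std_rank i := #|[set k | lex_lt k i]|.

Lemma std_rank_lt i : (std_rank i < n)%N.
Proof.
rewrite -[n]card_ord -cardsT; apply: proper_card; rewrite properT.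
by apply/eqP => /setP/(_ i); rewrite !inE lex_lt_irr.
Qed.

Lemma std_rank_ltE i j : (std_rank i < std_rank j)%N = lex_lt i j.
Proof.
have rank_lt k l : lex_lt k l -> (std_rank k < std_rank l)%N.
  move=> kl; apply/proper_card/properP; split; last by exists k; rewrite !inE ?lex_lt_irr.
  by apply/subsetP => m; rewrite !inE => /lex_lt_trans; apply.
apply/idP/idP => [|/rank_lt //]; have [->|/lex_lt_total] := eqVneq i j; first by rewrite ltnn.
by case/orP => // /rank_lt; lia.
Qed.

Lemma std_rank_inj : injective (fun i => Ordinal (std_rank_lt i)).
Proof.
move=> i j /(congr1 val) /= ij; apply/eqP; apply: contraT => /lex_lt_total.
by rewrite -!std_rank_ltE ij ltnn.
Qed.

Definition std_perm : 'S_n := perm std_rank_inj.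

Lemma std_perm_ltE i j : (std_perm i < std_perm j)%N = lex_lt i j.
Proof. by rewrite !permE std_rank_ltE. Qed.

Lemma std_perm_eq (w : 'S_n) :
  (forall i j, lex_lt i j -> (w i < w j)%N) -> std_perm = w.
Proof.
move=> lex_w; have ltE i j : lex_lt i j = (w i < w j)%N.
  apply/idP/idP => [/lex_w //|]; have [->|/lex_lt_total] := eqVneq i j; first by rewrite ltnn.
  by case/orP => // /lex_w; lia.
apply/permP => i; apply: val_inj; rewrite permE /= /std_rank.
have -> : [set k | lex_lt k i] = w @^-1: [set y : 'I_n | (0 <= y < w i)%N].
  by apply/setP => k; rewrite !inE ltE.
by rewrite card_preimset ?card_ord_range ?subn0 //; [apply: ltnW | apply: perm_inj].
Qed.

End Standardization.

Lemma std_perm_sorted n N (g : 'I_n -> 'I_N) :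
  nondecr [ffun x => g ((std_perm (fun i => g i : nat))^-1 x)%g].
Proof.
set w := std_perm _; apply/forallP => x; apply/forallP => y; apply/implyP => xy.
rewrite !ffunE; set a := (w^-1)%g x; set b := (w^-1)%g y.
have : (w a <= w b)%N by rewrite /a /b !permKV.
by rewrite leq_eqVlt std_perm_ltE => /orP[/eqP/val_inj/perm_inj-> //|]; rewrite /lex_lt; lia.
Qed.

Section Shuffle.
Variables p q : nat.
Variable z : 'S_(p + q).
Hypothesis zsh : shuffle_perm z.
Implicit Types a b c u v x y : 'I_(p + q).

Definition from_left x := ((z^-1)%g x < p)%N.

Lemma shuffle_ltS a b :
  b = a.+1 :> nat -> (b < p)%N || (p <= a)%N -> (z a < z b)%N.
Proof.
move=> ba blk; have [i ia ib] := @pos_gap _ a (ltac:(rewrite -ba; exact: ltn_ord b)).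
have -> : b = pos_hi i by apply: ord_inj; rewrite ba ib.
have i_a : i = a :> nat by rewrite -ia.
by rewrite -ia; move/forallP/(_ i)/implyP: zsh; apply; lia.
Qed.

Lemma shuffle_lt a b : (a < b)%N -> (b < p)%N || (p <= a)%N -> (z a < z b)%N.
Proof.
move=> ab; have [d] : exists d, b = (a + d.+1)%N :> nat by exists (b - a.+1)%N; lia.
elim: d a ab => [|d IH] a ab bad blk; first by apply: shuffle_ltS; lia.
have c_lt : (a.+1 < p + q)%N by have := ltn_ord b; lia.
apply: (@ltn_trans (z (Ordinal c_lt))); first by apply: shuffle_ltS => /=; lia.
by apply: IH => /=; lia.
Qed.

Lemma shuffle_le a b : (a <= b)%N -> (b < p)%N || (p <= a)%N -> (z a <= z b)%N.
Proof.
rewrite leq_eqVlt => /orP[/eqP/val_inj -> //|ab] blk.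
exact/ltnW/shuffle_lt.
Qed.

Lemma shuffle_ltE a b : (a < p)%N = (b < p)%N -> (z a < z b)%N = (a < b)%N.
Proof.
move=> blk; apply/idP/idP => [|ab]; last by apply: shuffle_lt => //; lia.
apply: contraTT; rewrite -!leqNgt => ba.
by apply: shuffle_le => //; lia.
Qed.

Lemma shuffle_succ u v :
  (u < p)%N = (v < p)%N -> z v = (z u).+1 :> nat -> v = u.+1 :> nat.
Proof.
move=> uv zvu; have uLv : (u < v)%N by rewrite -shuffle_ltE // zvu.
case: (ltngtP v u.+1) => [|vu|//]; first lia.
have w_lt : (u.+1 < p + q)%N by have := ltn_ord v; lia.
pose w := Ordinal w_lt.
have uw : (u < p)%N = (w < p)%N by rewrite /=; lia.
have := shuffle_ltE uw; have := shuffle_ltE (etrans (esym uw) uv) (b := v).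
rewrite /= ltnSn vu; lia.
Qed.

Lemma shuffle_between u v c :
  (u < p)%N = (v < p)%N -> v = u.+1 :> nat -> (z u < c < z v)%N ->
  from_left c = ~~ (u < p)%N.
Proof.
move=> uv vu /andP[uc cv]; rewrite /from_left; set w := (z^-1)%g c.
have zw : z w = c by rewrite permKV.
have : (w < p)%N != (u < p)%N.
  by apply/negP => /eqP wu; move: uc cv; rewrite -zw !shuffle_ltE -?wu -?uv //; lia.
by case: (w < p)%N; case: (u < p)%N.
Qed.

(* Letters of the second word exceed those of the first, so such an i is a descent
   of r_zeta J' K' for all J', K'. *)
Definition forced_descent (i : 'I_(p + q).-1) :=
  ~~ from_left (pos_lo i) && from_left (pos_hi i).

Definition left_cuts (R : {set 'I_(p + q).-1}) : {set 'I_p.-1} :=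
  [set j | adjacent_in R (z (lshift q (pos_lo j))) (z (lshift q (pos_hi j)))].

Definition right_cuts (R : {set 'I_(p + q).-1}) : {set 'I_q.-1} :=
  [set k | adjacent_in R (z (rshift p (pos_lo k))) (z (rshift p (pos_hi k)))].

Lemma from_left_lshift (a : 'I_p) : from_left (z (lshift q a)).
Proof. by rewrite /from_left permK /= ltn_ord. Qed.

Lemma from_left_rshift (b : 'I_q) : ~~ from_left (z (rshift p b)).
Proof. by rewrite /from_left permK /= -leqNgt leq_addr. Qed.

Section RZeta.
Variables (J' : {set 'I_p.-1}) (K' : {set 'I_q.-1}).

Definition rword x := crossw p (zetaJ J') (zetaJ K') ((z^-1)%g x).

Lemma mem_r_zeta i : (i \in r_zeta z J' K') = (rword (pos_hi i) < rword (pos_lo i))%N.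
Proof. by rewrite inE. Qed.

Lemma rword_lshift (a : 'I_p) : rword (z (lshift q a)) = zetaJ J' a.
Proof. by rewrite /rword /crossw permK /= ltn_ord. Qed.

Lemma rword_rshift (b : 'I_q) : rword (z (rshift p b)) = (p + zetaJ K' b)%N.
Proof. by rewrite /rword /crossw permK /= ltnNge leq_addr addKn. Qed.

Lemma rword_left x : from_left x -> (rword x < p)%N.
Proof. by rewrite /from_left /rword /crossw => xl; rewrite xl; apply: zetaJ_lt. Qed.

Lemma rword_right x : ~~ from_left x -> (p <= rword x)%N.
Proof. by rewrite /from_left /rword /crossw => /negbTE ->; rewrite leq_addr. Qed.

Lemma forced_descent_in_r_zeta i : forced_descent i -> i \in r_zeta z J' K'.
Proof.
case/andP => /rword_right lo /rword_left hi.
by rewrite mem_r_zeta (leq_trans hi lo).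
Qed.

Lemma left_right_notin_r_zeta i :
  from_left (pos_lo i) -> ~~ from_left (pos_hi i) -> i \notin r_zeta z J' K'.
Proof.
move=> /rword_left lo /rword_right hi.
by rewrite mem_r_zeta -leqNgt ltnW // (leq_trans lo hi).
Qed.

Lemma left_adjacent_r_zeta i (j : 'I_p.-1) :
  pos_lo i = z (lshift q (pos_lo j)) -> pos_hi i = z (lshift q (pos_hi j)) ->
  (i \in r_zeta z J' K') = (j \in J').
Proof. by move=> lo hi; rewrite mem_r_zeta lo hi !rword_lshift zetaJ_descent. Qed.

Lemma right_adjacent_r_zeta i (k : 'I_q.-1) :
  pos_lo i = z (rshift p (pos_lo k)) -> pos_hi i = z (rshift p (pos_hi k)) ->
  (i \in r_zeta z J' K') = (k \in K').
Proof.
by move=> lo hi; rewrite mem_r_zeta lo hi !rword_rshift ltn_add2l zetaJ_descent.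
Qed.

End RZeta.

Lemma left_pair i : from_left (pos_lo i) -> from_left (pos_hi i) ->
  {j : 'I_p.-1 | pos_lo i = z (lshift q (pos_lo j)) & pos_hi i = z (lshift q (pos_hi j))}.
Proof.
rewrite /from_left; set u := (z^-1)%g (pos_lo i); set v := (z^-1)%g (pos_hi i).
move=> up vp; have vu : v = u.+1 :> nat.
  by apply: shuffle_succ; rewrite ?up ?vp // !permKV.
have u_lt : (u < p.-1)%N by lia.
by exists (Ordinal u_lt); rewrite -[LHS](permKV z); congr (z _); apply: val_inj.
Qed.

Lemma right_pair i : ~~ from_left (pos_lo i) -> ~~ from_left (pos_hi i) ->
  {k : 'I_q.-1 | pos_lo i = z (rshift p (pos_lo k)) & pos_hi i = z (rshift p (pos_hi k))}.
Proof.
rewrite /from_left -!leqNgt; set u := (z^-1)%g (pos_lo i); set v := (z^-1)%g (pos_hi i).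
move=> up vp; have vu : v = u.+1 :> nat.
  by apply: shuffle_succ; rewrite ?ltnNge ?up ?vp // !permKV.
have u_lt : (u - p < q.-1)%N by have := ltn_ord v; lia.
exists (Ordinal u_lt); rewrite -[LHS](permKV z); congr (z _).
all: by apply: ord_inj => /=; rewrite -/u -/v; lia.
Qed.

Lemma r_zeta_subsetE (J' : {set 'I_p.-1}) (K' : {set 'I_q.-1}) (R : {set 'I_(p + q).-1}) :
  (r_zeta z J' K' \subset R) =
  [&& [forall i, forced_descent i ==> (i \in R)],
      J' \subset left_cuts R & K' \subset right_cuts R].
Proof.
apply/subsetP/and3P => [sub|[/forallP forced /subsetP sJ /subsetP sK] i].
  split; first by apply/forallP => i; apply/implyP => /(forced_descent_in_r_zeta J' K')/sub.
  - apply/subsetP => j jJ; rewrite inE; apply/forallP => i.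
    by apply/implyP => /andP[/eqP lo /eqP hi]; rewrite sub // (left_adjacent_r_zeta J' K' lo hi).
  - apply/subsetP => k kK; rewrite inE; apply/forallP => i.
    by apply/implyP => /andP[/eqP lo /eqP hi]; rewrite sub // (right_adjacent_r_zeta J' K' lo hi).
case lo: (from_left (pos_lo i)); case hi: (from_left (pos_hi i)).
- have [j elo ehi] := left_pair lo hi.
  rewrite (left_adjacent_r_zeta J' K' elo ehi) => /sJ; rewrite inE.
  by rewrite -elo -ehi adjacent_inE.
- by rewrite (negbTE (left_right_notin_r_zeta J' K' _ _)) ?hi.
- by move=> _; apply: (implyP (forced i)); rewrite /forced_descent lo hi.
- have [k elo ehi] := right_pair (negbT lo) (negbT hi).
  rewrite (right_adjacent_r_zeta J' K' elo ehi) => /sK; rewrite inE.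
  by rewrite -elo -ehi adjacent_inE.
Qed.

Lemma greatest_isE (R : {set 'I_(p + q).-1}) (J : {set 'I_p.-1}) (K : {set 'I_q.-1}) :
  greatest_is z R J K =
  [&& [forall i, forced_descent i ==> (i \in R)], J == left_cuts R & K == right_cuts R].
Proof.
rewrite /greatest_is r_zeta_subsetE; apply/andP/and3P => [[]|[forced /eqP-> /eqP->]].
  case/and3P => forced sJ sK /forallP/(_ (left_cuts R))/forallP/(_ (right_cuts R)).
  by rewrite r_zeta_subsetE forced !subxx !eqEsubset sJ sK => /andP[-> ->].
rewrite forced !subxx; split=> //.
by apply/forallP => J'; apply/forallP => K'; rewrite r_zeta_subsetE forced; apply/implyP.
Qed.

Section Ascents.
Variables (N : nat) (g : {ffun 'I_(p + q) -> 'I_N}).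
Hypothesis g_nondecr : nondecr g.
Hypothesis g_forced : forall i, forced_descent i -> i \in ascents g.

Lemma forced_ascent_lt x y :
  ~~ from_left x -> from_left y -> (x < y)%N -> (g x < g y)%N.
Proof.
move=> xr yl xy; have [d] : exists d, y = (x + d.+1)%N :> nat by exists (y - x.+1)%N; lia.
elim: d x xr xy => [|d IH] x xr xy yxd.
  have [i ix iy] := @pos_gap _ x (ltac:(have := ltn_ord y; lia)).
  have iy' : pos_hi i = y by apply: ord_inj; lia.
  by move: (@g_forced i); rewrite /forced_descent inE ix iy' xr yl => /(_ isT).
have [i ix iw] := @pos_gap _ x (ltac:(have := ltn_ord y; lia)).
have gxw : (g x <= g (pos_hi i))%N by rewrite -ix nondecrP.
case wl: (from_left (pos_hi i)).
  have := @g_forced i; rewrite /forced_descent inE ix xr wl => /(_ isT) ltw.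
  by apply: (leq_trans ltw); apply: nondecrP; lia.
by apply: leq_ltn_trans gxw (IH _ _ _ _); rewrite ?wl //; lia.
Qed.

Lemma left_cuts_ascents :
  left_cuts (ascents g) =
  [set j | g (z (lshift q (pos_lo j))) < g (z (lshift q (pos_hi j)))]%N.
Proof.
apply/setP => j; rewrite !inE.
set u := lshift q (pos_lo j); set v := lshift q (pos_hi j).
have jp := ltn_predS_ord j.
have blk : (u < p)%N = (v < p)%N by rewrite /u /v /=; lia.
have uv : (z u < z v)%N by apply: shuffle_lt; rewrite /u /v /= ?ltnSn ?jp.
have [zvu|] := eqVneq (z v : nat) (z u).+1; first exact: adjacent_in_ascents.
move=> zvu; rewrite adjacent_in_far; last by lia.
have c_lt : ((z u).+1 < p + q)%N by have := ltn_ord (z v); lia.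
pose c := Ordinal c_lt.
have cr : ~~ from_left c.
  by rewrite (@shuffle_between u v c blk (erefl _)) /= ?negbK ?(ltnW jp) //; lia.
have gu : (g (z u) <= g c)%N by apply: nondecrP => /=.
by apply/esym/(leq_ltn_trans gu)/forced_ascent_lt; rewrite ?from_left_lshift //=; lia.
Qed.

Lemma shuffle_lex_lt k i : lex_lt (fun x => g (z x) : nat) k i -> (z k < z i)%N.
Proof.
rewrite /lex_lt => /orP[gki|/andP[/eqP gki ki]].
  by rewrite ltnNge; apply/negP => /(nondecrP g_nondecr); lia.
have [kp|pk] := ltnP k p; have [ip|pi] := ltnP i p; last 2 first.
- by have := leq_trans pk (ltnW ki); lia.
- by rewrite shuffle_ltE // !ltnNge pk pi.
- by rewrite shuffle_ltE ?kp ?ip.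
rewrite ltnNge leq_eqVlt; apply/negP => /orP[/eqP/ord_inj/perm_inj ik|zik].
  by rewrite ik ltnn in ki.
have := @forced_ascent_lt (z i) (z k); rewrite /from_left !permK kp -leqNgt pi.
by move=> /(_ isT isT zik); lia.
Qed.

Lemma right_cuts_ascents :
  right_cuts (ascents g) =
  [set k | g (z (rshift p (pos_lo k))) < g (z (rshift p (pos_hi k)))]%N.
Proof.
apply/setP => k; rewrite !inE.
set u := rshift p (pos_lo k); set v := rshift p (pos_hi k).
have kq := ltn_predS_ord k.
have blk : (u < p)%N = (v < p)%N by rewrite /u /v /=; lia.
have uv : (z u < z v)%N by apply: shuffle_lt; rewrite /u /v /=; lia.
have [zvu|] := eqVneq (z v : nat) (z u).+1; first exact: adjacent_in_ascents.
move=> zvu; rewrite adjacent_in_far; last by lia.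
have [i iu ic] := @pos_gap _ (z u) (ltac:(have := ltn_ord (z v); lia)).
have cl : from_left (pos_hi i).
  rewrite (@shuffle_between u v _ blk (addnS p k)) /= -?leqNgt ?leq_addr //.
  by move: ic => /= ->; lia.
have := @g_forced i; rewrite /forced_descent cl iu from_left_rshift inE iu.
by move=> /(_ isT) lt; apply/esym/(leq_trans lt)/nondecrP; lia.
Qed.

End Ascents.

End Shuffle.

Section Unshuffle.
Variables p q N : nat.

Local Notation word_pair := ({ffun 'I_p -> 'I_N} * {ffun 'I_q -> 'I_N})%type.
Local Notation shuffled_word := ({ffun 'I_(p + q) -> 'I_N} * 'S_(p + q))%type.

Definition concat_word (u : word_pair) (x : 'I_(p + q)) : 'I_N :=
  match split x with inl a => u.1 a | inr b => u.2 b end.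

Definition unshuffle (v : shuffled_word) : word_pair :=
  ([ffun a => v.1 (v.2 (lshift q a))], [ffun b => v.1 (v.2 (rshift p b))]).

Definition sort_concat (u : word_pair) : shuffled_word :=
  let z := std_perm (fun x => concat_word u x : nat) in
  ([ffun x => concat_word u ((z^-1)%g x)], z).

Definition factor_pair J K (u : word_pair) :=
  [&& nondecr u.1, ascents u.1 == J, nondecr u.2 & ascents u.2 == K].

Definition shuffle_pair J K (v : shuffled_word) :=
  [&& nondecr v.1, shuffle_perm v.2 & greatest_is v.2 (ascents v.1) J K].

Lemma concat_word_lshift u a : concat_word u (lshift q a) = u.1 a.
Proof. by rewrite /concat_word -[lshift q a]/(unsplit (inl a)) unsplitK. Qed.

Lemma concat_word_rshift u b : concat_word u (rshift p b) = u.2 b.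
Proof. by rewrite /concat_word -[rshift p b]/(unsplit (inr b)) unsplitK. Qed.

Lemma concat_word_unshuffle v x : concat_word (unshuffle v) x = v.1 (v.2 x).
Proof. by rewrite /concat_word; case: (split x) (splitK x) => [a|b] /= <-; rewrite ffunE. Qed.

Lemma concat_word_le u (x y : 'I_(p + q)) :
  nondecr u.1 -> nondecr u.2 -> (x <= y)%N -> (y < p)%N || (p <= x)%N ->
  (concat_word u x <= concat_word u y)%N.
Proof.
move=> u1_nd u2_nd xy; have [yp _|py /= px] := ltnP y p.
  have xp : (x < p)%N by lia.
  have -> : x = lshift q (Ordinal xp) by apply: val_inj.
  have -> : y = lshift q (Ordinal yp) by apply: val_inj.
  by rewrite !concat_word_lshift; apply: nondecrP.
have xq : (x - p < q)%N by have := ltn_ord x; lia.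
have yq : (y - p < q)%N by have := ltn_ord y; lia.
have -> : x = rshift p (Ordinal xq) by apply: ord_inj => /=; lia.
have -> : y = rshift p (Ordinal yq) by apply: ord_inj => /=; lia.
by rewrite !concat_word_rshift; apply: nondecrP => /=; lia.
Qed.

Lemma sort_concatK : cancel sort_concat unshuffle.
Proof.
by case=> u1 u2; congr pair; apply/ffunP => a;
  rewrite !ffunE permK ?concat_word_lshift ?concat_word_rshift.
Qed.

Lemma unshuffle_factor_pair J K v :
  shuffle_pair J K v -> factor_pair J K (unshuffle v).
Proof.
case: v => g z /and3P[/= g_nd zsh].
rewrite greatest_isE // => /and3P[/forallP forced /eqP-> /eqP->].
have g_forced i : forced_descent z i -> i \in ascents g by apply/implyP.
apply/and4P; split.
- apply/forallP => a; apply/forallP => b; apply/implyP => ab; rewrite !ffunE.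
  by apply: nondecrP => //; apply: shuffle_le => //=; rewrite ltn_ord.
- by rewrite left_cuts_ascents //; apply/eqP/setP => j; rewrite !inE !ffunE.
- apply/forallP => a; apply/forallP => b; apply/implyP => ab; rewrite !ffunE.
  by apply: nondecrP => //; apply: shuffle_le => //=; rewrite ?leq_add2l ?leq_addr ?orbT.
- by rewrite right_cuts_ascents //; apply/eqP/setP => k; rewrite !inE !ffunE.
Qed.

Lemma unshuffleK J K v : shuffle_pair J K v -> sort_concat (unshuffle v) = v.
Proof.
case: v => g z /and3P[/= g_nd zsh]; rewrite greatest_isE // => /and3P[/forallP forced _ _].
have g_forced i : forced_descent z i -> i \in ascents g by apply/implyP.
have zE : std_perm (fun x => concat_word (unshuffle (g, z)) x : nat) = z.
  apply: std_perm_eq => k i; rewrite /lex_lt !concat_word_unshuffle.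
  exact: shuffle_lex_lt.
rewrite /sort_concat zE; congr pair; apply/ffunP => x.
by rewrite ffunE concat_word_unshuffle permKV.
Qed.

Lemma sort_concat_shuffle_pair J K u :
  factor_pair J K u -> shuffle_pair J K (sort_concat u).
Proof.
case: u => u1 u2 /and4P[u1_nd /eqP u1J u2_nd /eqP u2K].
set u := (u1, u2); rewrite /sort_concat /shuffle_pair /=.
set z := std_perm _; set g := [ffun x => _].
have g_nd : nondecr g := std_perm_sorted (concat_word u).
have gz x : g (z x) = concat_word u x by rewrite ffunE permK.
have zsh : shuffle_perm z.
  apply/forallP => i; apply/implyP => ip.
  have := @concat_word_le u (pos_lo i) (pos_hi i) u1_nd u2_nd (leqnSn _).
  by rewrite std_perm_ltE /lex_lt /=; lia.
have g_forced i : forced_descent z i -> i \in ascents g.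
  rewrite /forced_descent /from_left -leqNgt inE.
  rewrite -{2}(permKV z (pos_lo i)) -{2}(permKV z (pos_hi i)) !gz.
  set b := (z^-1)%g (pos_lo i); set a := (z^-1)%g (pos_hi i).
  move=> /andP[pb ap]; have : (z b < z a)%N by rewrite !permKV.
  by rewrite std_perm_ltE /lex_lt; lia.
rewrite g_nd zsh greatest_isE //=; apply/and3P; split.
- by apply/forallP => i; apply/implyP/g_forced.
- rewrite left_cuts_ascents // -u1J; apply/eqP/setP => j.
  by rewrite !inE !gz !concat_word_lshift.
- rewrite right_cuts_ascents // -u2K; apply/eqP/setP => k.
  by rewrite !inE !gz !concat_word_rshift.
Qed.

Lemma sum_factor_pairs (R : comNzRingType) (X : 'I_N -> R) J K :
  (\sum_(u | factor_pair J K u) (\prod_a X (u.1 a)) * (\prod_b X (u.2 b)) =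
   \sum_(v | shuffle_pair J K v) \prod_x X (v.1 x))%R.
Proof.
rewrite (reindex_onto unshuffle sort_concat) => [|u _]; last exact: sort_concatK.
apply: eq_big => [v|v _].
  apply/andP/idP => [[/sort_concat_shuffle_pair + /eqP <-] //|v_sh].
  by rewrite (unshuffleK v_sh) eqxx unshuffle_factor_pair.
rewrite (reindex_inj (@perm_inj _ v.2)) big_split_ord /=.
by congr (_ * _)%R; apply: eq_bigr => i _; rewrite ffunE.
Qed.

End Unshuffle.

Lemma count_le_sorted (s : seq nat) x t : sorted ltn s -> (t < size s)%N ->
  (t < count (fun v => v <= x) s)%N = (nth 0 s t <= x)%N.
Proof.
elim: s t => [|h s IH] t //= hs ts.
have [hx|xh] /= := leqP h x.
  by case: t ts => [|t] ts //=; rewrite add1n ltnS IH // (path_sorted hs).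
have s_gt : all (ltn h) s := order_path_min ltn_trans hs.
have -> : count (fun v => v <= x) s = 0.
  apply/eqP; rewrite -leqn0 leqNgt -has_count; apply/hasPn => v /(allP s_gt) /=; lia.
case: t ts => [|t] ts /=; first lia.
by have /(allP s_gt) := mem_nth 0 (ts : (t < size s)%N); rewrite /=; lia.
Qed.

Lemma enum_set_sorted N (I : {set 'I_N}) : sorted ltn (map val (enum I)).
Proof.
rewrite -[enum _](eq_filter (mem_enum _)) -(eq_filter (mem_map val_inj _)) -filter_map.
by rewrite (sorted_filter ltn_trans) // unlock val_ord_enum iota_ltn_sorted.
Qed.

Lemma nth_enum_ltE N (I : {set 'I_N}) d i j : (i < #|I|)%N -> (j < #|I|)%N ->
  (nth d (enum I) i < nth d (enum I) j)%N = (i < j)%N.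
Proof.
rewrite cardE => iI jI; have lt_nth k l : (k < size (enum I))%N -> (l < size (enum I))%N ->
    (k < l)%N -> (nth d (enum I) k < nth d (enum I) l)%N.
  move=> kI lI kl; rewrite -!(nth_map d (val d)) //.
  by apply: (sorted_ltn_nth ltn_trans); rewrite ?inE ?size_map // enum_set_sorted.
apply/idP/idP => [ij|]; last exact: lt_nth.
rewrite ltnNge leq_eqVlt; apply/negP => /orP[/eqP ji|/(lt_nth _ _ jI iI)]; last lia.
by move: ij; rewrite ji ltnn.
Qed.

Section Blocks.
Variables (n : nat) (J : {set 'I_n.-1}).

Definition cut_points : seq nat := sort leq [seq (val j).+1 | j <- enum J].

Lemma cut_points_sorted : sorted ltn cut_points.
Proof.
rewrite ltn_sorted_uniq_leq sort_uniq sort_sorted ?andbT; last exact: leq_total.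
by rewrite map_inj_uniq ?enum_uniq // => a b [] /val_inj.
Qed.

Lemma size_cut_points : size cut_points = #|J|.
Proof. by rewrite size_sort size_map cardE. Qed.

Lemma mem_cut_points (j : 'I_n.-1) : (j.+1 \in cut_points) = (j \in J).
Proof.
rewrite mem_sort; apply/mapP/idP => [[j' j'J /eqP]|jJ]; last by exists j; rewrite ?mem_enum.
by rewrite eqSS => /eqP /val_inj ->; rewrite -mem_enum.
Qed.

Lemma cut_points_range v : v \in cut_points -> (0 < v < n)%N.
Proof.
by rewrite mem_sort => /mapP[j _ ->]; rewrite ltn0Sn; exact: ltn_predS_ord j.
Qed.

Definition block_index x := count (fun v => v <= x) cut_points.

Lemma block_index_mono x y : (x <= y)%N -> (block_index x <= block_index y)%N.
Proof. by move=> xy; apply: sub_count => v /= vx; apply: leq_trans xy. Qed.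

Lemma block_index_le x : (block_index x <= #|J|)%N.
Proof. by rewrite -size_cut_points count_size. Qed.

Lemma block_index0 : block_index 0 = 0.
Proof. by apply/eqP; rewrite -leqn0 leqNgt -has_count; apply/hasPn => v /cut_points_range; lia. Qed.

Lemma block_indexS (j : 'I_n.-1) : block_index j.+1 = (block_index j + (j \in J))%N.
Proof.
rewrite /block_index -mem_cut_points.
rewrite -(count_uniq_mem _ (sorted_uniq ltn_trans ltnn cut_points_sorted)).
have disj : count (predI (fun v => v <= j) (pred1 j.+1)) cut_points = 0.
  apply/eqP; rewrite -leqn0 leqNgt -has_count; apply/hasPn => v _.
  by apply/negP => /andP[vj /eqP vS]; lia.
rewrite -count_predUI disj addn0; apply: eq_count => v /=.
by rewrite leq_eqVlt ltnS orbC.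
Qed.

Lemma block_index_nth t : (t < #|J|)%N -> block_index (nth 0 cut_points t) = t.+1.
Proof.
rewrite -size_cut_points => ts; have s_lt := cut_points_sorted.
apply/eqP; rewrite eqn_leq (count_le_sorted _ s_lt ts) leqnn andbT.
have [t1s|] := ltnP t.+1 (size cut_points); last first.
  by rewrite /block_index; have := count_size (fun v => v <= nth 0 cut_points t) cut_points; lia.
rewrite leqNgt (count_le_sorted _ s_lt t1s) -ltnNge.
exact: (sorted_ltn_nth ltn_trans).
Qed.

Lemma size_compo : size (compo J) = #|J|.+1.
Proof. by rewrite /compo size_pairmap size_rcons -/cut_points size_cut_points. Qed.

Lemma card_block t : (t < #|J|.+1)%N ->
  #|[set x : 'I_n | block_index x == t]| = nth 0 (compo J) t.
Proof.
move=> tJ; rewrite /compo -/cut_points (nth_pairmap 0) ?size_rcons ?size_cut_points //.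
set s := cut_points; have s_lt : sorted ltn s := cut_points_sorted.
have ss : size s = #|J| := size_cut_points.
set hi := nth 0 (rcons s n) t; set lo := nth 0 (0 :: rcons s n) t.
have hin : (hi <= n)%N.
  rewrite /hi nth_rcons; case: ifP => ts; last by rewrite ss; case: ifP => //; lia.
  by have /andP[_ /ltnW] := cut_points_range (mem_nth 0 ts).
rewrite -(card_ord_range lo hin); apply: eq_card => x; rewrite !inE.
have lo_x : (t <= block_index x)%N = (lo <= x)%N.
  rewrite /lo; case: t tJ {hi hin lo} => [|t] tJ //=.
  by rewrite nth_rcons ifT ?ss // count_le_sorted // ss.
have x_hi : (block_index x < t.+1)%N = (x < hi)%N.
  rewrite /hi nth_rcons; case: ifP => ts; first by rewrite ltnS leqNgt count_le_sorted // -ltnNge.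
  have -> : t = size s by lia.
  by rewrite eqxx ltn_ord ltnS /block_index count_size.
by rewrite eqn_leq -ltnS x_hi -lo_x andbC.
Qed.

End Blocks.

Section BlockMap.
Variables (n N : nat) (J : {set 'I_n.-1}) (I : {set 'I_N.+1}).
Hypothesis cardI : #|I| = #|J|.+1.

Definition block_map : {ffun 'I_n -> 'I_N.+1} :=
  [ffun x : 'I_n => nth ord0 (enum I) (block_index J x)].

Lemma block_index_lt x : (block_index J x < #|I|)%N.
Proof. by rewrite cardI ltnS block_index_le. Qed.

Lemma block_map_nondecr : nondecr block_map.
Proof.
apply/forallP => x; apply/forallP => y; apply/implyP => xy; rewrite !ffunE.
have := block_index_mono J xy; rewrite leq_eqVlt => /orP[/eqP-> //|lt].
by rewrite ltnW // nth_enum_ltE ?block_index_lt.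
Qed.

Lemma ascents_block_map : ascents block_map = J.
Proof.
apply/setP => j; rewrite inE !ffunE nth_enum_ltE ?block_index_lt //= block_indexS.
by case: (j \in J); lia.
Qed.

Lemma image_block_map : (0 < n)%N -> [set block_map x | x : 'I_n] = I.
Proof.
move=> n_gt0; apply/setP => v; apply/imsetP/idP => [[x _ ->]|vI].
  by rewrite ffunE -mem_enum mem_nth // -cardE block_index_lt.
have : (index v (enum I) < #|J|.+1)%N by rewrite -cardI cardE index_mem mem_enum.
have nth_v : nth ord0 (enum I) (index v (enum I)) = v by rewrite nth_index ?mem_enum.
case: (index v (enum I)) nth_v => [|t] nth_v t_lt.
  by exists (Ordinal n_gt0); rewrite // ffunE /= block_index0.
have t_mem : (t < size (cut_points J))%N by rewrite size_cut_points.
have /andP[_ tn] := cut_points_range (mem_nth 0 t_mem).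
by exists (Ordinal tn); rewrite // ffunE /= block_index_nth.
Qed.

End BlockMap.

Section NondecrImage.
Variables (n N : nat).
Implicit Types g h : {ffun 'I_n.+1 -> 'I_N}.

Lemma nondecr_image_min g h : nondecr h ->
  [set g x | x : 'I_n.+1] = [set h x | x : 'I_n.+1] -> (h ord0 <= g ord0)%N.
Proof.
move=> h_nd gh; have : g ord0 \in [set h x | x : 'I_n.+1] by rewrite -gh imset_f.
by case/imsetP => y _ ->; apply: nondecrP.
Qed.

Lemma nondecr_image_ascent g h : nondecr h ->
  [set g x | x : 'I_n.+1] = [set h x | x : 'I_n.+1] -> forall j : 'I_n.+1.-1,
  j \in ascents g -> g (pos_lo j) = h (pos_lo j) -> (h (pos_hi j) <= g (pos_hi j))%N.
Proof.
move=> h_nd gh j; rewrite inE => gj gh_lo.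
have : g (pos_hi j) \in [set h x | x : 'I_n.+1] by rewrite -gh imset_f.
case/imsetP => y _ ey; rewrite ey; apply: nondecrP => //=; rewrite ltnNge.
apply/negP => y_lo; have := nondecrP h_nd (y_lo : (y <= pos_lo j)%N).
by rewrite -gh_lo -ey; lia.
Qed.

Lemma nondecr_eq g h : nondecr g -> nondecr h -> ascents g = ascents h ->
  [set g x | x : 'I_n.+1] = [set h x | x : 'I_n.+1] -> g = h.
Proof.
move=> g_nd h_nd gh_asc gh; apply/ffunP => -[m]; elim: m => [|m IH] m_lt.
  have -> : Ordinal m_lt = ord0 by apply: val_inj.
  by apply: ord_inj; apply/eqP; rewrite eqn_leq !nondecr_image_min.
have m_lt' : (m < n)%N by lia.
pose j : 'I_n.+1.-1 := Ordinal m_lt'.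
have -> : Ordinal m_lt = pos_hi j by apply: val_inj.
have {IH} := IH (ltnW m_lt); rewrite (_ : Ordinal _ = pos_lo j) => [gh_lo|]; last exact: val_inj.
clearbody j.
have [jg|jNg] := boolP (j \in ascents g).
  have jh : j \in ascents h by rewrite -gh_asc.
  apply: ord_inj; apply/eqP; rewrite eqn_leq.
  rewrite (nondecr_image_ascent h_nd gh jg gh_lo).
  by rewrite (nondecr_image_ascent g_nd (esym gh) jh (esym gh_lo)).
have jNh : j \notin ascents h by rewrite -gh_asc.
move: jNg jNh; rewrite !inE -!leqNgt gh_lo => g_eq h_eq.
have lo_hi : (pos_lo j <= pos_hi j)%N by [].
have := nondecrP g_nd lo_hi; have := nondecrP h_nd lo_hi.
rewrite gh_lo => hlo_hi hlo_ghi; apply: ord_inj; apply/eqP.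
by rewrite eqn_leq (leq_trans g_eq hlo_hi) (leq_trans h_eq hlo_ghi).
Qed.

Lemma image_nondecr g : nondecr g ->
  [set g x | x : 'I_n.+1] = g ord0 |: [set g (pos_hi j) | j in ascents g].
Proof.
move=> g_nd; apply/setP => v; apply/imsetP/setU1P => [[[m m_lt] _ ->]|].
  elim: m m_lt => [|m IH] m_lt; first by left; congr (g _); apply: val_inj.
  have m_lt' : (m < n)%N by lia.
  pose j : 'I_n.+1.-1 := Ordinal m_lt'.
  have -> : Ordinal m_lt = pos_hi j by apply: val_inj.
  have [jg|jNg] := boolP (j \in ascents g); first by right; apply/imsetP; exists j.
  have -> : g (pos_hi j) = g (pos_lo j).
    apply: ord_inj; apply/eqP; move: jNg; rewrite inE -leqNgt eqn_leq => ->.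
    exact: nondecrP.
  have -> : pos_lo j = Ordinal (ltnW m_lt) by apply: val_inj.
  exact: IH.
by case=> [->|/imsetP[j _ ->]]; [exists ord0 | exists (pos_hi j)].
Qed.

Lemma card_image_nondecr g : nondecr g ->
  #|[set g x | x : 'I_n.+1]| = #|ascents g|.+1.
Proof.
move=> g_nd; have hi_lt (j j' : 'I_n.+1.-1) : j' \in ascents g -> (j < j')%N ->
    (g (pos_hi j) < g (pos_hi j'))%N.
  by rewrite inE => j'g jj'; apply: leq_ltn_trans j'g; apply: nondecrP.
rewrite image_nondecr // cardsU1 card_in_imset => [|j j' jg j'g /= e]; last first.
  by case: (ltngtP j j') => [/(hi_lt _ _ j'g)|/(hi_lt _ _ jg)|/val_inj //]; rewrite e ltnn.
suff -> : g ord0 \notin [set g (pos_hi j) | j in ascents g] by [].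
apply/imsetP => -[j]; rewrite inE => gj g0.
have : (g ord0 <= g (pos_lo j))%N by apply: nondecrP.
by rewrite g0; lia.
Qed.

End NondecrImage.

Import GRing.Theory.
Local Open Scope ring_scope.

Lemma prod_compo (R : comNzRingType) n N (J : {set 'I_n.-1}) (I : {set 'I_N.+1})
    (X : 'I_N.+1 -> R) : #|I| = #|J|.+1 ->
  \prod_(x <- zip (enum I) (compo J)) X x.1 ^+ x.2 = \prod_(x : 'I_n) X (block_map J I x).
Proof.
move=> cardI; have sI : size (enum I) = #|J|.+1 by rewrite -cardE.
rewrite (big_nth (ord0, 0%N)) size_zip sI size_compo minnn big_mkord.
have bJ (x : 'I_n) : (block_index J x < #|J|.+1)%N by rewrite ltnS block_index_le.
rewrite (partition_big (fun x => Ordinal (bJ x)) predT) //=.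
apply: eq_bigr => t _; rewrite nth_zip ?sI ?size_compo //=.
rewrite (eq_bigr (fun _ => X (nth ord0 (enum I) t))) => [|x /eqP <-]; last by rewrite ffunE.
rewrite prodr_const -(card_block (ltn_ord t)); congr (_ ^+ _).
by apply: eq_card => x; rewrite !inE.
Qed.

Lemma sum_compo_nondecr (R : comNzRingType) n N (J : {set 'I_n.-1}) (X : 'I_N -> R) :
  (0 < n)%N ->
  \sum_(I : {set 'I_N} | #|I| == size (compo J)) \prod_(x <- zip (enum I) (compo J)) X x.1 ^+ x.2
  = \sum_(g : {ffun 'I_n -> 'I_N} | nondecr g && (ascents g == J)) \prod_x X (g x).
Proof.
move=> n_gt0; rewrite size_compo; case: N X => [|N] X.
  rewrite !big_pred0 // => [g|I]; first by case: (g (Ordinal n_gt0)).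
  by apply/negbTE; have := max_card I; rewrite card_ord; lia.
case: n J n_gt0 => [//|n] J n_gt0.
rewrite (eq_bigr (fun I => \prod_x X (block_map J I x))) => [|I /eqP cardI]; last first.
  exact: prod_compo.
have block_map_inj : {in [set I : {set 'I_N.+1} | #|I| == #|J|.+1] &, injective (block_map J)}.
  move=> I I'; rewrite !inE => /eqP cardI /eqP cardI' e.
  by rewrite -(image_block_map cardI n_gt0) -(image_block_map cardI' n_gt0) e.
rewrite (eq_bigl (fun I => I \in [set I : {set 'I_N.+1} | #|I| == #|J|.+1])) => [|I];
  last by rewrite inE.
rewrite -(big_imset (fun g : {ffun 'I_n.+1 -> 'I_N.+1} => \prod_x X (g x)) block_map_inj) /=.
apply: eq_bigl => g; apply/imsetP/andP => [[I]|[g_nd /eqP gJ]].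
  by rewrite inE => /eqP cardI ->; rewrite block_map_nondecr // ascents_block_map.
have cardI : #|[set g x | x : 'I_n.+1]| = #|J|.+1 by rewrite card_image_nondecr // gJ.
exists [set g x | x : 'I_n.+1]; first by rewrite inE cardI.
apply: nondecr_eq => //; first exact: block_map_nondecr.
  by rewrite ascents_block_map.
by rewrite image_block_map.
Qed.

Lemma Mqsym_nondecrE N n (J : {set 'I_n.-1}) : (0 < n)%N ->
  Mqsym N J = \sum_(g : {ffun 'I_n -> 'I_N} | nondecr g && (ascents g == J)) \prod_x 'X_(g x).
Proof. exact: (sum_compo_nondecr J (fun i : 'I_N => 'X_i : {mpoly int[N]})). Qed.

Lemma Mqsym_mulE N p q (J : {set 'I_p.-1}) (K : {set 'I_q.-1}) : (0 < p)%N -> (0 < q)%N ->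
  Mqsym N J * Mqsym N K = \sum_(v | shuffle_pair J K v) \prod_x 'X_(v.1 x).
Proof.
move=> p_gt0 q_gt0; rewrite !Mqsym_nondecrE // big_distrlr pair_big /=.
rewrite -(sum_factor_pairs (fun i : 'I_N => ('X_i : {mpoly int[N]}))).
by apply: eq_bigl => u; rewrite /factor_pair !andbA.
Qed.

Theorem mainTheorem14 (p q : nat) (J : {set 'I_p.-1}) (K : {set 'I_q.-1}) :
  (0 < p)%N -> (0 < q)%N ->
  forall N : nat,
    Mqsym N J * Mqsym N K =
    \sum_(R : {set 'I_(p + q).-1}) (count_zeta J K R)%:R * Mqsym N R.
Proof.
move=> p_gt0 q_gt0 N; rewrite Mqsym_mulE //.
rewrite -(pair_big_dep (@nondecr (p + q) N)
  (fun g z => shuffle_perm z && greatest_is z (ascents g) J K) (fun g _ => \prod_x 'X_(g x))) /=.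
under eq_bigr => g _ do rewrite sumr_const -[_ *+ _]mulr_natl.
rewrite (partition_big (@ascents (p + q) N) predT) //=; apply: eq_bigr => R _.
rewrite Mqsym_nondecrE ?addn_gt0 ?p_gt0 // big_distrr /=.
by apply: eq_bigr => g /andP[_ /eqP gR]; rewrite /count_zeta cardsE gR.
Qed.
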